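(* If $r_{\min}<1$ and $\eta>\max\{\frac{r_{\min}}2,\frac{r_{\max}}n\}$, then the set $E_1=\{(x_1,\dots,x_n)\in[0,1]^n:\max_{i,j\in\mathcal V}|x_i-x_j|\ge1\}$ is finite-time robustly reachable from $[0,1]^n$ under control protocol (C1).
   Context: Fix $n\ge3$, $\mathcal V=\{1,\dots,n\}$, confidence thresholds $r_i\in(0,1]$, $r_{\min}=\min_ir_i$, $r_{\max}=\max_ir_i$, $\eta>0$. States $x(t)\in[0,1]^n$. Neighbor set $\mathcal N_i(t)=\{j:|x_j(t)-x_i(t)|\le r_i\}$ (contains $i$), $\Pi_{[0,1]}(y)=\min\{1,\max\{0,y\}\}$. Control protocol (C1): $x_i(t+1)=\Pi_{[0,1]}\big(|\mathcal N_i(t)|^{-1}\sum_{j\in\mathcal N_i(t)}x_j(t)+u_i(t)+b_i(t)\big)$, where $\delta_i(t)\in(0,\eta)$ is a chosen parameter, $u_i(t)\in[-\eta+\delta_i(t),\eta-\delta_i(t)]$ a chosen control input, $b_i(t)\in[-\delta_i(t),\delta_i(t)]$ an arbitrary uncertainty; $\delta_i(t),u_i(t)$ may depend on $x(0),\dots,x(t)$. A set $S\subseteq[0,1]^n$ is finite-time robustly reachable from $[0,1]^n$ under the protocol if there exist constants $T>0$ and $\varepsilon\in(0,\eta)$, independent of $x(0)$, such that for every $x(0)\in[0,1]^n$, either $x(0)\in S$, or one can choose $\delta_i(t)\in[\varepsilon,\eta)$ and $u_i(t)\in[-\eta+\delta_i(t),\eta-\delta_i(t)]$ for $i\in\mathcal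 V$, $0\le t<T$, guaranteeing that for arbitrary $b_i(t)\in[-\delta_i(t),\delta_i(t)]$ there is $t\in[1,T]$ with $x(t)\in S$. *)

(* classical reals. Agents are indexed 0..n-1 (paper: 1..n). *)
From Stdlib Require Import Reals Lra List.
Import ListNotations.
Open Scope R_scope.

(* states, thresholds, inputs: functions nat -> R, only indices < n matter *)
Definition state := nat -> R.

Definition in_unit_cube (n : nat) (x : state) : Prop :=
  forall i, (i < n)%nat -> 0 <= x i <= 1.

Definition proj01 (y : R) : R := Rmin 1 (Rmax 0 y).

Definition nbr (r : state) (x : state) (i j : nat) : bool :=
  if Rle_dec (Rabs (x j - x i)) (r i) then true else false.

Definition nb_card (n : nat) (r x : state) (i : nat) : R :=
  fold_right Rplus 0 (map (fun j => if nbr r x i j then 1 else 0) (seq 0 n)).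
Definition nb_sum (n : nat) (r x : state) (i : nat) : R :=
  fold_right Rplus 0 (map (fun j => if nbr r x i j then x j else 0) (seq 0 n)).

Definition rmin (n : nat) (r : state) : R := fold_right Rmin (r 0%nat) (map r (seq 0 n)).
Definition rmax (n : nat) (r : state) : R := fold_right Rmax (r 0%nat) (map r (seq 0 n)).

Definition step_C1 (n : nat) (r x u b : state) (i : nat) : R :=
  proj01 (nb_sum n r x i / nb_card n r x i + u i + b i).

(* A feedback strategy: at time t, given the trajectory history xs
   (only xs 0, ..., xs t are allowed to matter), choose delta_i(t), u_i(t). *)
Definition causal (n : nat) (F : nat -> (nat -> state) -> state) : Prop :=
  forall t xs ys, (forall s i, (s <= t)%nat -> (i < n)%nat -> xs s i = ys s i) ->
    forall i, (i < n)%nat -> F t xs i = F t ys i.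

Definition ft_robustly_reachable (n : nat) (r : state) (eta : R)
    (Sset : state -> Prop) : Prop :=
  exists (T : nat) (eps : R), (0 < T)%nat /\ 0 < eps < eta /\
  forall x0 : state, in_unit_cube n x0 ->
    Sset x0 \/
    exists (D U : nat -> (nat -> state) -> state),
      causal n D /\ causal n U /\
      (forall t xs i, (t < T)%nat -> (i < n)%nat ->
         eps <= D t xs i < eta /\
         - eta + D t xs i <= U t xs i <= eta - D t xs i) /\
      forall (b : nat -> state) (x : nat -> state),
        x 0%nat = x0 ->
        (forall t i, (t < T)%nat -> (i < n)%nat ->
           - D t x i <= b t i <= D t x i /\
           x (S t) i = step_C1 n r (x t) (U t x) (b t) i) ->
        exists t, (1 <= t <= T)%nat /\ Sset (x t).

Definition E1_set (n : nat) (x : state) : Prop :=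
  in_unit_cube n x /\
  exists i j, (i < n)%nat /\ (j < n)%nat /\ Rabs (x i - x j) >= 1.

(* Fix an uncertainty level [d].  While the controls push everybody up by
   [eta - 2 d] per step, all agents reach 1 after [N] steps; one step of
   control [- eta + 3 d] then brings everybody into an interval of length
   [2 d] below [1 - eta + 4 d].  From there, pushing an agent [k] with
   [r k = rmin] down and all others up opens a gap [2 eta - 6 d > rmin]
   (this is where [eta > rmin / 2] is needed): [k] loses all its neighbors and
   sinks to 0 at speed [eta - 2 d], while any other agent sees [k] with weight
   at most [1 / n] and so, since [eta > rmax / n], is kept at 1. *)

From Stdlib Require Import Reals Lra Lia List.
Import ListNotations.
Open Scope R_scope.

Definition sum_map {A : Type} (f : A -> R) (l : list A) : R :=
  fold_right Rplus 0 (map f l).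

Lemma sum_map_ext {A : Type} (f g : A -> R) (l : list A) :
  (forall a, In a l -> f a = g a) -> sum_map f l = sum_map g l.
Proof. intros H; unfold sum_map; f_equal; now apply map_ext_in. Qed.

Lemma sum_map_le {A : Type} (f g : A -> R) (l : list A) :
  (forall a, In a l -> f a <= g a) -> sum_map f l <= sum_map g l.
Proof.
  unfold sum_map; induction l as [|a l IH]; intros H; simpl; [lra|].
  apply Rplus_le_compat; [apply H; now left|].
  apply IH; intros; apply H; now right.
Qed.

Lemma sum_map_const {A : Type} (c : R) (l : list A) :
  sum_map (fun _ => c) l = INR (length l) * c.
Proof.
  unfold sum_map; induction l as [|a l IH]; cbn [length map fold_right]; [simpl; ring|].
  rewrite IH, S_INR; ring.
Qed.

Lemma sum_map_nonneg {A : Type} (f : A -> R) (l : list A) :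
  (forall a, In a l -> 0 <= f a) -> 0 <= sum_map f l.
Proof.
  intros H; rewrite <- (Rmult_0_r (INR (length l))), <- sum_map_const.
  now apply sum_map_le.
Qed.

Lemma sum_map_nonpos {A : Type} (f : A -> R) (l : list A) :
  (forall a, In a l -> f a <= 0) -> sum_map f l <= 0.
Proof.
  intros H; rewrite <- (Rmult_0_r (INR (length l))), <- sum_map_const.
  now apply sum_map_le.
Qed.

Lemma sum_map_sub_scale {A : Type} (f g : A -> R) (c : R) (l : list A) :
  sum_map (fun a => f a - c * g a) l = sum_map f l - c * sum_map g l.
Proof. unfold sum_map; induction l as [|a l IH]; simpl; [ring|]; rewrite IH; ring. Qed.

Lemma sum_map_single {A : Type} (f : A -> R) (l : list A) (k : A) :
  NoDup l -> In k l -> (forall a, In a l -> a <> k -> f a = 0) ->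
  sum_map f l = f k.
Proof.
  induction l as [|a l IH]; intros Hnd Hk H; [destruct Hk|].
  apply NoDup_cons_iff in Hnd as [Ha Hnd].
  change (f a + sum_map f l = f k).
  destruct Hk as [<-|Hk].
  - rewrite (sum_map_ext _ (fun _ => 0)), sum_map_const; [ring|].
    intros b Hb; apply H; [now right|]; intros ->; contradiction.
  - rewrite (H a), IH; [ring|assumption|assumption| |now left|intros ->; contradiction].
    intros b Hb; apply H; now right.
Qed.

Lemma le_div_of_mul_le (a s c : R) : 0 < c -> a * c <= s -> a <= s / c.
Proof.
  intros Hc H; apply (Rmult_le_reg_r c); [lra|].
  unfold Rdiv; rewrite Rmult_assoc, Rinv_l; lra.
Qed.

Lemma div_le_of_le_mul (a s c : R) : 0 < c -> s <= a * c -> s / c <= a.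
Proof.
  intros Hc H; apply (Rmult_le_reg_r c); [lra|].
  unfold Rdiv; rewrite Rmult_assoc, Rinv_l; lra.
Qed.

Lemma proj01_range (v : R) : 0 <= proj01 v <= 1.
Proof. unfold proj01, Rmin, Rmax; repeat destruct Rle_dec; lra. Qed.

Lemma proj01_ge (L v : R) : L <= 1 -> L <= v -> L <= proj01 v.
Proof. unfold proj01, Rmin, Rmax; repeat destruct Rle_dec; lra. Qed.

Lemma proj01_le (h v : R) : 0 <= h -> v <= h -> proj01 v <= h.
Proof. unfold proj01, Rmin, Rmax; repeat destruct Rle_dec; lra. Qed.

Lemma proj01_of_ge1 (v : R) : 1 <= v -> proj01 v = 1.
Proof. unfold proj01, Rmin, Rmax; repeat destruct Rle_dec; lra. Qed.

Lemma fold_Rmin_attained (f : nat -> R) (d : R) (l : list nat) :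
  fold_right Rmin d (map f l) = d \/
  exists a, In a l /\ fold_right Rmin d (map f l) = f a.
Proof.
  induction l as [|a l [IH|[b [Hb IH]]]]; simpl; [now left| |].
  - rewrite IH; unfold Rmin; destruct Rle_dec; [right; exists a; auto|now left].
  - right; rewrite IH; unfold Rmin; destruct Rle_dec; [exists a|exists b]; auto.
Qed.

Lemma rmin_attained (n : nat) (r : state) :
  (0 < n)%nat -> exists k, (k < n)%nat /\ rmin n r = r k.
Proof.
  intros Hn; unfold rmin.
  destruct (fold_Rmin_attained r (r 0%nat) (seq 0 n)) as [E|[k [Hk E]]].
  - now exists 0%nat.
  - apply in_seq in Hk; exists k; split; [lia|exact E].
Qed.

Lemma fold_Rmax_ge (f : nat -> R) (d : R) (l : list nat) (a : nat) :
  In a l -> f a <= fold_right Rmax d (map f l).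
Proof.
  induction l as [|b l IH]; intros Ha; [destruct Ha|]; simpl.
  destruct Ha as [->|Ha]; [apply Rmax_l|].
  eapply Rle_trans; [now apply IH|apply Rmax_r].
Qed.

Lemma le_rmax (n : nat) (r : state) (i : nat) : (i < n)%nat -> r i <= rmax n r.
Proof. intros Hi; apply fold_Rmax_ge, in_seq; lia. Qed.

Lemma nbr_true_le (r x : state) (i j : nat) :
  nbr r x i j = true -> Rabs (x j - x i) <= r i.
Proof. unfold nbr; destruct Rle_dec; easy. Qed.

Lemma nbr_true_of_le (r x : state) (i j : nat) :
  Rabs (x j - x i) <= r i -> nbr r x i j = true.
Proof. unfold nbr; destruct Rle_dec; easy. Qed.

Lemma nbr_refl (r x : state) (i : nat) : 0 <= r i -> nbr r x i i = true.
Proof. intros; apply nbr_true_of_le; rewrite Rminus_diag, Rabs_R0; lra. Qed.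

Definition nb_avg (n : nat) (r x : state) (i : nat) : R :=
  nb_sum n r x i / nb_card n r x i.

Lemma nb_card_ge1 (n : nat) (r x : state) (i : nat) :
  (i < n)%nat -> 0 <= r i -> 1 <= nb_card n r x i.
Proof.
  intros Hi Hr.
  assert (Hind : sum_map (fun l => if Nat.eqb l i then 1 else 0) (seq 0 n) = 1).
  { rewrite (sum_map_single _ _ i); [now rewrite Nat.eqb_refl|apply seq_NoDup| |].
    - apply in_seq; lia.
    - intros l _ Hl; now apply Nat.eqb_neq in Hl as ->. }
  rewrite <- Hind; apply sum_map_le; intros l _.
  destruct (Nat.eqb_spec l i) as [->|_]; [rewrite nbr_refl by lra|destruct nbr]; lra.
Qed.

Lemma nb_sum_sub_card (n : nat) (r x : state) (i : nat) (v : R) :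
  nb_sum n r x i - v * nb_card n r x i =
  sum_map (fun l => if nbr r x i l then x l - v else 0) (seq 0 n).
Proof.
  change (sum_map (fun l => if nbr r x i l then x l else 0) (seq 0 n)
          - v * sum_map (fun l => if nbr r x i l then 1 else 0) (seq 0 n)
          = sum_map (fun l => if nbr r x i l then x l - v else 0) (seq 0 n)).
  rewrite <- sum_map_sub_scale; apply sum_map_ext; intros l _; destruct nbr; ring.
Qed.

Lemma nb_avg_ge (n : nat) (r x : state) (i : nat) (lo : R) :
  (i < n)%nat -> 0 <= r i ->
  (forall l, (l < n)%nat -> nbr r x i l = true -> lo <= x l) ->
  lo <= nb_avg n r x i.
Proof.
  intros Hi Hr H; pose proof (nb_card_ge1 n r x i Hi Hr).
  apply le_div_of_mul_le; [lra|].
  enough (0 <= nb_sum n r x i - lo * nb_card n r x i) by lra.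
  rewrite nb_sum_sub_card; apply sum_map_nonneg; intros l Hl; apply in_seq in Hl.
  destruct nbr eqn:E; [specialize (H l ltac:(lia) E)|]; lra.
Qed.

Lemma nb_avg_le (n : nat) (r x : state) (i : nat) (hi : R) :
  (i < n)%nat -> 0 <= r i ->
  (forall l, (l < n)%nat -> nbr r x i l = true -> x l <= hi) ->
  nb_avg n r x i <= hi.
Proof.
  intros Hi Hr H; pose proof (nb_card_ge1 n r x i Hi Hr).
  apply div_le_of_le_mul; [lra|].
  enough (nb_sum n r x i - hi * nb_card n r x i <= 0) by lra.
  rewrite nb_sum_sub_card; apply sum_map_nonpos; intros l Hl; apply in_seq in Hl.
  destruct nbr eqn:E; [specialize (H l ltac:(lia) E)|]; lra.
Qed.

Lemma nb_avg_isolated (n : nat) (r x : state) (i : nat) :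
  (i < n)%nat -> 0 <= r i ->
  (forall l, (l < n)%nat -> nbr r x i l = true -> l = i) ->
  nb_avg n r x i = x i.
Proof.
  intros Hi Hr H.
  assert (Hother : forall l, In l (seq 0 n) -> l <> i -> nbr r x i l = false).
  { intros l Hl Hli; apply in_seq in Hl.
    destruct nbr eqn:E; [now specialize (H l ltac:(lia) E)|reflexivity]. }
  assert (Hin : In i (seq 0 n)) by (apply in_seq; lia).
  change (sum_map (fun j => if nbr r x i j then x j else 0) (seq 0 n)
          / sum_map (fun j => if nbr r x i j then 1 else 0) (seq 0 n) = x i).
  rewrite !(sum_map_single _ _ i (seq_NoDup n 0) Hin)
    by (intros l Hl Hli; now rewrite Hother).
  rewrite nbr_refl by lra; field.
Qed.

(* If [j] sees [k] at all, it sees every agent, so [k] enters the average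
   with weight [1 / n]. *)
Lemma nb_avg_ge_outlier (n : nat) (r x : state) (v : R) (j k : nat) :
  (j < n)%nat -> (k < n)%nat -> j <> k -> 0 <= r j ->
  (forall l, (l < n)%nat -> l <> k -> x l = v) ->
  v - r j / INR n <= nb_avg n r x j.
Proof.
  intros Hj Hk Hjk Hr Hx.
  assert (Hn : 0 < INR n) by (apply lt_0_INR; lia).
  assert (Hkin : In k (seq 0 n)) by (apply in_seq; lia).
  assert (Hdev : nb_sum n r x j - v * nb_card n r x j =
                 if nbr r x j k then x k - v else 0).
  { rewrite nb_sum_sub_card, (sum_map_single _ _ k (seq_NoDup n 0) Hkin); [reflexivity|].
    intros l Hl Hlk; apply in_seq in Hl; rewrite Hx by lia; destruct nbr; ring. }
  pose proof (nb_card_ge1 n r x j Hj Hr).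
  assert (0 <= r j / INR n) by (apply Rle_mult_inv_pos; lra).
  destruct (nbr r x j k) eqn:E.
  - assert (Hcard : nb_card n r x j = INR n).
    { transitivity (sum_map (fun _ => 1) (seq 0 n));
        [|now rewrite sum_map_const, length_seq, Rmult_1_r].
      apply sum_map_ext; intros l Hl; apply in_seq in Hl.
      destruct (Nat.eq_dec l k) as [->|Hlk]; [now rewrite E|].
      rewrite nbr_true_of_le; [reflexivity|].
      rewrite !Hx, Rminus_diag, Rabs_R0 by lia; lra. }
    apply nbr_true_le in E; rewrite (Hx j) in E by lia.
    assert (v - x k <= r j)
      by (eapply Rle_trans; [apply Rle_abs|now rewrite Rabs_minus_sym]).
    apply le_div_of_mul_le; [lra|].
    rewrite Hcard in Hdev |- *.
    replace ((v - r j / INR n) * INR n) with (v * INR n - r j) by (field; lra); lra.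
  - apply le_div_of_mul_le; [lra|].
    assert (r j / INR n * nb_card n r x j >= 0) by (apply Rle_ge, Rmult_le_pos; lra).
    lra.
Qed.

Definition steer (eta d : R) (k N t i : nat) : R :=
  if (t <? N)%nat then eta - d
  else if (t =? N)%nat then - eta + 3 * d
  else if (i =? k)%nat then - (eta - d) else eta - d.

Lemma steer_bounds (eta d : R) (k N t i : nat) :
  0 <= d -> 4 * d <= eta -> - eta + d <= steer eta d k N t i <= eta - d.
Proof. intros; unfold steer; destruct (t <? N)%nat, (t =? N)%nat, (i =? k)%nat; lra. Qed.

Lemma steer_split (eta d : R) (k N t i : nat) : (N < t)%nat ->
  steer eta d k N t i = if (i =? k)%nat then - (eta - d) else eta - d.
Proof.
  intros Ht; unfold steer.
  destruct (Nat.ltb_spec t N), (Nat.eqb_spec t N); [lia..|reflexivity].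
Qed.

Section Trajectory.

Variables (n : nat) (r : state) (eta d : R) (k N : nat) (x b : nat -> state).

Let speed := eta - 2 * d.
Let k_top := 1 - 2 * eta + 6 * d.
Let T := (N + 2 + N)%nat.

Hypothesis n_ge2 : (2 <= n)%nat.
Hypothesis r_ge0 : forall i, (i < n)%nat -> 0 <= r i.
Hypothesis k_lt : (k < n)%nat.
Hypothesis rk_lt1 : r k < 1.
Hypothesis rk_gap : r k + 6 * d < 2 * eta.
Hypothesis rmax_gap : rmax n r / INR n + 2 * d <= eta.
Hypothesis N_large : 1 < INR N * speed.
Hypothesis x0_cube : in_unit_cube n (x 0%nat).
Hypothesis b_bound : forall t i, (t < T)%nat -> (i < n)%nat -> - d <= b t i <= d.
Hypothesis x_dynamics : forall t i, (t < T)%nat -> (i < n)%nat ->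
  x (S t) i = step_C1 n r (x t) (steer eta d k N t) (b t) i.

Lemma speed_pos : 0 < speed.
Proof. pose proof (pos_INR N); destruct (Rle_lt_dec speed 0); [nra|assumption]. Qed.

Lemma x_step t i : (t < T)%nat -> (i < n)%nat ->
  x (S t) i = proj01 (nb_avg n r (x t) i + steer eta d k N t i + b t i).
Proof. exact (x_dynamics t i). Qed.

Lemma x_in_cube t : (t <= T)%nat -> in_unit_cube n (x t).
Proof.
  intros Ht i Hi; destruct t as [|t]; [now apply x0_cube|].
  rewrite x_step by lia; apply proj01_range.
Qed.

Lemma x_rise t : (t <= N)%nat ->
  forall i, (i < n)%nat -> Rmin 1 (INR t * speed) <= x t i.
Proof.
  pose proof speed_pos.
  induction t as [|t IH]; intros Ht i Hi.
  - rewrite Rmult_0_l; eapply Rle_trans; [apply Rmin_r|now apply x0_cube].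
  - assert (Havg : Rmin 1 (INR t * speed) <= nb_avg n r (x t) i)
      by (apply nb_avg_ge; auto; intros l Hl _; apply IH; [lia|exact Hl]).
    destruct (b_bound t i ltac:(lia) Hi).
    rewrite x_step by lia; unfold steer; destruct (Nat.ltb_spec t N); [|lia].
    apply proj01_ge; [apply Rmin_l|].
    rewrite S_INR; unfold speed, Rmin in *; repeat destruct Rle_dec; lra.
Qed.

Lemma x_at_N_one i : (i < n)%nat -> x N i = 1.
Proof.
  intros Hi; pose proof (x_rise N (le_n N) i Hi) as Hrise.
  rewrite Rmin_left in Hrise by lra.
  pose proof (x_in_cube N ltac:(lia) i Hi); lra.
Qed.

Lemma x_after_drop i : (i < n)%nat ->
  1 - eta + 2 * d <= x (S N) i <= Rmax 0 (1 - eta + 4 * d).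
Proof.
  intros Hi.
  assert (Havg : nb_avg n r (x N) i = 1).
  { apply Rle_antisym; [apply nb_avg_le|apply nb_avg_ge]; auto;
      intros l Hl _; rewrite x_at_N_one by exact Hl; lra. }
  destruct (b_bound N i ltac:(lia) Hi).
  rewrite x_step, Havg by lia; unfold steer; rewrite Nat.ltb_irrefl, Nat.eqb_refl.
  split; [apply proj01_ge; pose proof speed_pos; unfold speed in *; lra|].
  apply proj01_le; [apply Rmax_l|]; eapply Rle_trans; [|apply Rmax_r]; lra.
Qed.

Lemma x_separated_start :
  (forall j, (j < n)%nat -> j <> k -> x (N + 2)%nat j = 1) /\
  x (N + 2)%nat k <= Rmax 0 k_top.
Proof.
  replace (N + 2)%nat with (S (S N)) by lia.
  assert (Hlo : forall i, (i < n)%nat -> 1 - eta + 2 * d <= nb_avg n r (x (S N)) i)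
    by (intros i Hi; apply nb_avg_ge; auto; intros l Hl _; now apply x_after_drop).
  split.
  - intros j Hj Hjk; destruct (b_bound (S N) j ltac:(lia) Hj).
    specialize (Hlo j Hj).
    rewrite x_step, steer_split by lia; apply Nat.eqb_neq in Hjk as ->.
    apply proj01_of_ge1; lra.
  - assert (Hhi : nb_avg n r (x (S N)) k <= Rmax 0 (1 - eta + 4 * d))
      by (apply nb_avg_le; auto; intros l Hl _; now apply x_after_drop).
    destruct (b_bound (S N) k ltac:(lia) k_lt).
    rewrite x_step, steer_split, Nat.eqb_refl by lia.
    apply proj01_le; [apply Rmax_l|].
    unfold k_top, Rmax in *; repeat destruct Rle_dec; lra.
Qed.

(* [1 - k_top = 2 eta - 6 d > r k], and [r k < 1] covers the case [k_top < 0]. *)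
Lemma k_isolated t : (t <= T)%nat ->
  (forall j, (j < n)%nat -> j <> k -> x t j = 1) -> x t k <= Rmax 0 k_top ->
  forall l, (l < n)%nat -> nbr r (x t) k l = true -> l = k.
Proof.
  intros Ht Hothers Hk l Hl E.
  destruct (Nat.eq_dec l k) as [|Hlk]; [assumption|exfalso].
  pose proof (x_in_cube t Ht k k_lt).
  apply nbr_true_le in E; rewrite Hothers, Rabs_pos_eq in E by (lia || lra).
  unfold k_top, Rmax in Hk; destruct Rle_dec; lra.
Qed.

Lemma x_separated_step t s : (N + 2 <= t < T)%nat ->
  (forall j, (j < n)%nat -> j <> k -> x t j = 1) ->
  x t k <= Rmax 0 (k_top - INR s * speed) ->
  (forall j, (j < n)%nat -> j <> k -> x (S t) j = 1) /\
  x (S t) k <= Rmax 0 (k_top - INR (S s) * speed).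
Proof.
  intros Ht Hothers Hk; pose proof speed_pos.
  assert (0 <= INR s * speed) by (apply Rmult_le_pos; [apply pos_INR|lra]).
  split.
  - intros j Hj Hjk; destruct (b_bound t j ltac:(lia) Hj).
    pose proof (nb_avg_ge_outlier n r (x t) 1 j k Hj k_lt Hjk (r_ge0 j Hj) Hothers).
    assert (r j / INR n <= rmax n r / INR n).
    { apply Rmult_le_compat_r; [left; apply Rinv_0_lt_compat, lt_0_INR; lia|].
      now apply le_rmax. }
    rewrite x_step, steer_split by lia; apply Nat.eqb_neq in Hjk as ->.
    apply proj01_of_ge1; unfold speed in *; lra.
  - assert (Hiso : nb_avg n r (x t) k = x t k).
    { apply nb_avg_isolated; auto; apply (k_isolated t); [lia|assumption|].
      eapply Rle_trans; [exact Hk|]; unfold Rmax; repeat destruct Rle_dec; lra. }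
    destruct (b_bound t k ltac:(lia) k_lt).
    rewrite x_step, Hiso, steer_split, Nat.eqb_refl by lia.
    apply proj01_le; [apply Rmax_l|].
    rewrite S_INR; unfold speed, Rmax in *; repeat destruct Rle_dec; lra.
Qed.

Lemma x_separated s : (s <= N)%nat ->
  (forall j, (j < n)%nat -> j <> k -> x (N + 2 + s)%nat j = 1) /\
  x (N + 2 + s)%nat k <= Rmax 0 (k_top - INR s * speed).
Proof.
  induction s as [|s IH]; intros Hs.
  - rewrite Nat.add_0_r, Rmult_0_l, Rminus_0_r; exact x_separated_start.
  - destruct IH as [Hothers Hk]; [lia|].
    rewrite Nat.add_succ_r; apply x_separated_step; [lia|assumption|assumption].
Qed.

Lemma trajectory_in_E1 : E1_set n (x T).
Proof.
  destruct (x_separated N (le_n N)) as [Hothers Hk].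
  assert (HxT : x T k = 0).
  { pose proof (r_ge0 k k_lt).
    rewrite Rmax_left in Hk by (unfold k_top, speed in *; lra).
    pose proof (x_in_cube T (le_n T) k k_lt); unfold T in *; lra. }
  split; [now apply x_in_cube|].
  set (j := if (k =? 0)%nat then 1%nat else 0%nat).
  assert (Hj : (j < n)%nat /\ j <> k) by (unfold j; destruct (Nat.eqb_spec k 0); lia).
  exists k, j; split; [assumption|]; split; [apply Hj|].
  unfold T in *; rewrite HxT, Hothers by apply Hj.
  rewrite Rabs_left; lra.
Qed.

End Trajectory.

Theorem lemma3 (n : nat) (r : nat -> R) (eta : R) :
  (3 <= n)%nat ->
  (forall i, (i < n)%nat -> 0 < r i <= 1) ->
  0 < eta ->
  rmin n r < 1 ->
  eta > Rmax (rmin n r / 2) (rmax n r / INR n) ->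
  ft_robustly_reachable n r eta (E1_set n).
Proof.
  intros Hn Hr Heta Hmin Hgt.
  destruct (rmin_attained n r) as [k [Hk Hrk]]; [lia|].
  pose proof (Rmax_l (rmin n r / 2) (rmax n r / INR n)).
  pose proof (Rmax_r (rmin n r / 2) (rmax n r / INR n)).
  set (d := Rmin eta (Rmin (2 * eta - r k) (eta - rmax n r / INR n)) / 8).
  assert (Hd : 0 < d /\ 8 * d <= eta /\ 8 * d <= 2 * eta - r k /\
               8 * d <= eta - rmax n r / INR n)
    by (unfold d, Rmin; repeat destruct Rle_dec; lra).
  destruct (INR_archimed (eta - 2 * d) 1) as [N HN]; [lra|].
  exists (N + 2 + N)%nat, d; split; [lia|]; split; [lra|].
  intros x0 Hx0; right.
  exists (fun _ _ _ => d), (fun t _ => steer eta d k N t).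
  split; [now intros ? ? ? ? ? ?|]; split; [now intros ? ? ? ? ? ?|]; split.
  { intros t xs i _ _; pose proof (steer_bounds eta d k N t i); lra. }
  intros b x Hx0eq Hdyn.
  exists (N + 2 + N)%nat; split; [lia|].
  apply (trajectory_in_E1 n r eta d k N x b); try lra; try lia.
  - intros i Hi; pose proof (Hr i Hi); lra.
  - now rewrite Hx0eq.
  - exact (fun t i Ht Hi => proj1 (Hdyn t i Ht Hi)).
  - exact (fun t i Ht Hi => proj2 (Hdyn t i Ht Hi)).
Qed.
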